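(* Let $n\ge3$ and let $\sigma$ be a Riemannian metric on the complement of a ball in $\mathbb{R}^n$ which is asymptotically flat. There exists $r_1>0$, depending only on $\sigma$, such that for every $r_0\ge r_1$ there exists a rotationally symmetric function $b\colon\mathbb{R}^n\setminus B_{r_0}(0)\to\mathbb{R}$ with (i) $b(x)\simeq r_0^{\,n-\frac32}\,|x|^{-(n-\frac52)}$, and (ii) $g^{ij}(\sigma,\nabla b)\,{}^\sigma\nabla^2_{ij}b\le 0$, i.e. $b$ is a static supersolution.
   Context: Asymptotic flatness of $\sigma$ means: there is a bounded function $\omega$ with $\omega(r)\to0$ as $r\to\infty$ such that $|\sigma_{ij}-\delta_{ij}|\lesssim\omega(r)$ and $|\partial\sigma_{ij}|\lesssim\omega(r)/r$ for $r=|x|$ large (Euclidean norms and partial derivatives). For a function $w$ with $|\nabla w|_\sigma<1$, $g^{ij}(\sigma,\nabla w)=\sigma^{ij}+\frac{\sigma^{ik}\sigma^{jl}w_kw_l}{1-\sigma^{kl}w_kw_l}$ and ${}^\sigma\nabla^2_{ij}w=w_{ij}-\Gamma^k_{ij}w_k$ with $\Gamma$ the Christoffel symbols of $\sigma$. The notation $x\lesssim y$ means $x\le Cy$ for a constant $C=C(n)>0$, and $x\simeq y$ means $x\lesssim y$ and $y\lesssim x$. *)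

From HB Require Import structures.
From mathcomp Require Import all_boot all_order all_algebra.
From mathcomp Require Import all_classical all_reals all_analysis.
Set Implicit Arguments. Unset Strict Implicit. Unset Printing Implicit Defensive.
Import Order.TTheory GRing.Theory Num.Theory.
Import numFieldNormedType.Exports.
Local Open Scope ring_scope.

Section Defs.
Variables (R : realType) (n : nat).

Definition enorm (x : 'rV[R]_n) : R := Num.sqrt (\sum_(i < n) (x 0 i) ^+ 2).

Definition ebasis (i : 'I_n) : 'rV[R]_n := delta_mx 0 i.

Definition partial (f : 'rV[R]_n -> R) (i : 'I_n) : 'rV[R]_n -> R :=
  fun x => derive f x (ebasis i).

Definition iter_partial (f : 'rV[R]_n -> R) (l : seq 'I_n) : 'rV[R]_n -> R :=
  foldr (fun i g => partial g i) f l.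

Definition riem_metric_ext (R0 : R) (sigma : 'rV[R]_n -> 'M[R]_n) : Prop :=
  forall x, R0 < enorm x ->
    (sigma x)^T = sigma x /\
    (forall v : 'rV[R]_n, v != 0 -> 0 < (v *m sigma x *m v^T) 0 0) /\
    (forall (i j : 'I_n) (l : seq 'I_n),
        differentiable (iter_partial (fun y => sigma y i j) l) x).

Definition asymp_flat (sigma : 'rV[R]_n -> 'M[R]_n) : Prop :=
  exists omega : R -> R,
    (exists M : R, forall r, `|omega r| <= M) /\
    (omega @ +oo%R --> (0 : R))%classic /\
    exists (C R1 : R), 0 < C /\
      forall x, R1 <= enorm x ->
        forall i j : 'I_n,
          `|sigma x i j - (i == j)%:R| <= C * omega (enorm x) /\
          forall k : 'I_n,
            `|partial (fun y => sigma y i j) k x| <= C * (omega (enorm x) / enorm x).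

Definition sinv (sigma : 'rV[R]_n -> 'M[R]_n) (x : 'rV[R]_n) : 'M[R]_n :=
  invmx (sigma x).

Definition christoffel (sigma : 'rV[R]_n -> 'M[R]_n) (x : 'rV[R]_n)
  (k i j : 'I_n) : R :=
  2^-1 * \sum_(l < n) sinv sigma x k l *
    (partial (fun y => sigma y j l) i x + partial (fun y => sigma y i l) j x
     - partial (fun y => sigma y i j) l x).

Definition grad_sq (sigma : 'rV[R]_n -> 'M[R]_n) (w : 'rV[R]_n -> R)
  (x : 'rV[R]_n) : R :=
  \sum_(k < n) \sum_(l < n) sinv sigma x k l * partial w k x * partial w l x.

Definition gmat (sigma : 'rV[R]_n -> 'M[R]_n) (w : 'rV[R]_n -> R)
  (x : 'rV[R]_n) (i j : 'I_n) : R :=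
  sinv sigma x i j +
  (\sum_(k < n) \sum_(l < n) sinv sigma x i k * sinv sigma x j l
                              * partial w k x * partial w l x)
  / (1 - grad_sq sigma w x).

Definition cov_hess (sigma : 'rV[R]_n -> 'M[R]_n) (w : 'rV[R]_n -> R)
  (x : 'rV[R]_n) (i j : 'I_n) : R :=
  partial (partial w i) j x - \sum_(k < n) christoffel sigma x k i j * partial w k x.

Definition static_op (sigma : 'rV[R]_n -> 'M[R]_n) (w : 'rV[R]_n -> R)
  (x : 'rV[R]_n) : R :=
  \sum_(i < n) \sum_(j < n) gmat sigma w x i j * cov_hess sigma w x i j.

Definition twice_diff (w : 'rV[R]_n -> R) (x : 'rV[R]_n) : Prop :=
  differentiable w x /\ forall i : 'I_n, differentiable (partial w i) x.

Definition rot_sym_ext (r0 : R) (w : 'rV[R]_n -> R) : Prop :=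
  forall x y : 'rV[R]_n, r0 <= enorm x -> enorm x = enorm y -> w x = w y.

End Defs.

From HB Require Import structures.
From mathcomp Require Import all_boot all_order all_algebra.
From mathcomp Require Import all_classical all_reals all_analysis.
From mathcomp Require Import ring lra.
Set Implicit Arguments. Unset Strict Implicit. Unset Printing Implicit Defensive.
Import Order.TTheory GRing.Theory Num.Theory.
Import numFieldNormedType.Exports.

Local Open Scope ring_scope.

(* The barrier is the radial function b(x) = c r0^(1-2p) (|x|^2 + r0^2)^p with
   2p = -(n - 5/2), i.e. b(x) = c r0 f(x/r0) for f(y) = (|y|^2 + 1)^p, so it is
   comparable to r0^(n-3/2) |x|^(-(n-5/2)) on |x| >= r0.  Writing u < 0 for the
   derivative of the profile in t = |x|^2, one has grad b = 2 u x and
   Hess b = u (4 (p-1) x x^T / (|x|^2 + r0^2) + 2 I): the exponent is chosen so that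
   the trace is at most u, while every entry is O(n |u|).  By scale invariance
   |grad b|^2 <= 4 c^2 p^2 for every r0, so for c ~ n^-4 the coefficients g^ij are
   close to sigma^ij.  Beyond some r1, asymptotic flatness makes sigma^ij - delta^ij
   and |x| Gamma small, so Gamma grad b is small compared to |u|, and altogether
   g^ij nabla^2_ij b <= u/4 < 0. *)

Section SumBounds.
Variables (R : realFieldType) (n : nat).

Lemma sum_mul_delta (F : 'I_n -> R) j : \sum_(i < n) F i * (i == j)%:R = F j.
Proof.
by rewrite (bigD1 j) //= eqxx mulr1 big1 ?addr0 // => i /negbTE ->; rewrite mulr0.
Qed.

Lemma norm_sum_ord_le (F : 'I_n -> R) M :
  (forall i, `|F i| <= M) -> `|\sum_(i < n) F i| <= n%:R * M.
Proof.
move=> FM; apply: le_trans (ler_norm_sum _ _ _) _.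
by apply: le_trans (ler_sum _ (fun i _ => FM i)) _; rewrite sumr_const card_ord mulr_natl.
Qed.

Lemma norm_sum2_ord_le (F : 'I_n -> 'I_n -> R) M :
  (forall i j, `|F i j| <= M) -> `|\sum_(i < n) \sum_(j < n) F i j| <= n%:R * (n%:R * M).
Proof. by move=> FM; apply: norm_sum_ord_le => i; apply: norm_sum_ord_le. Qed.

Lemma norm_delta_le1 i j : `|(i == j :> 'I_n)%:R : R| <= 1.
Proof. by case: (i == j); rewrite ?normr1 ?normr0. Qed.

End SumBounds.

Section RadialCalculus.
Variables (R : realType) (n : nat).
Implicit Types (x v : 'rV[R]_n) (i j : 'I_n).

Definition sqnorm x : R := \sum_(i < n) x 0 i ^+ 2.

Definition radial (phi : R -> R) x : R := phi (sqnorm x).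

Lemma sqnorm_ge0 x : 0 <= sqnorm x.
Proof. by apply: sumr_ge0 => i _; exact: sqr_ge0. Qed.

Lemma enorm_sqr x : enorm x ^+ 2 = sqnorm x.
Proof. exact/sqr_sqrtr/sqnorm_ge0. Qed.

Lemma norm_coord_le x i : `|x 0 i| <= enorm x.
Proof.
rewrite -sqrtr_sqr ler_sqrt ?sqnorm_ge0 // /sqnorm (bigD1 i) //= lerDl.
by apply: sumr_ge0 => k _; exact: sqr_ge0.
Qed.

Lemma norm_coordM_le x i j : `|x 0 i * x 0 j| <= sqnorm x.
Proof. by rewrite -enorm_sqr normrM expr2 ler_pM ?norm_coord_le. Qed.

Lemma ebasisE i j : ebasis R i 0 j = (j == i)%:R.
Proof. by rewrite /ebasis mxE eqxx. Qed.

Lemma derive_coord x v i : 'D_v (fun y : 'rV[R]_n => y 0 i) x = v 0 i.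
Proof.
have := congr1 (fun M : 'rV[R]_n => M 0 i) (derive_mx (@derivable_id _ _ x v)).
by rewrite derive_id mxE.
Qed.

Lemma derivable_coord x v i : derivable (fun y : 'rV[R]_n => y 0 i) x v.
Proof. exact/diff_derivable/differentiable_coord. Qed.

Lemma sqnormE : sqnorm = \sum_(i < n) (fun y : 'rV[R]_n => y 0 i) ^+ 2.
Proof. by apply/funext => y; rewrite /sqnorm fct_sumE. Qed.

Lemma differentiable_sqnorm x : differentiable sqnorm x.
Proof.
rewrite sqnormE; apply: differentiable_sum => i.
exact/differentiableX/differentiable_coord.
Qed.

Lemma partial_sqnorm x j : partial sqnorm j x = 2 * x 0 j.
Proof.
rewrite /partial sqnormE derive_sum => [|i]; last exact/derivableX/derivable_coord.
rewrite (eq_bigr (fun i => 2 * x 0 i * (i == j)%:R)) ?sum_mul_delta // => i _.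
rewrite deriveX; last exact: derivable_coord.
by have -> := derive_coord x (ebasis R j) i; rewrite ebasisE expr1.
Qed.

Lemma partial_comp (f : 'rV[R]_n -> R) (g : R -> R) dg i x :
  differentiable f x -> is_derive (f x) 1 g dg ->
  partial (g \o f) i x = partial f i x * dg.
Proof.
move=> df [/derivable1_diffP dg1 <-].
rewrite /partial deriveE; last exact: differentiable_comp.
rewrite diff_comp // deriveE // -derive1E derive1E' //= -[X in 'd g _ X = _]mulr1.
by rewrite -[_ * 1]/(_ *: (1 : R)) linearZ.
Qed.

Section Radial.
Variables (phi phi' phi'' : R -> R).
Hypothesis phi_deriv : forall t : R, 0 <= t -> is_derive t 1 phi (phi' t).
Hypothesis phi'_deriv : forall t : R, 0 <= t -> is_derive t 1 phi' (phi'' t).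

Let differentiable_comp_sqnorm (g g' : R -> R) x :
  (forall t : R, 0 <= t -> is_derive t 1 g (g' t)) -> differentiable (g \o sqnorm) x.
Proof.
move=> gd; apply: differentiable_comp; first exact: differentiable_sqnorm.
by have [/derivable1_diffP] := gd _ (sqnorm_ge0 x).
Qed.

Lemma partial_radial i : partial (radial phi) i = fun x => 2 * x 0 i * phi' (sqnorm x).
Proof.
apply/funext => x.
rewrite (partial_comp i (differentiable_sqnorm x) (phi_deriv (sqnorm_ge0 x))).
by rewrite partial_sqnorm.
Qed.

Lemma partial2_radial i j x :
  partial (partial (radial phi) i) j x =
  4 * (x 0 i * x 0 j) * phi'' (sqnorm x) + 2 * (i == j)%:R * phi' (sqnorm x).
Proof.
rewrite partial_radial.
have -> : (fun y : 'rV[R]_n => 2 * y 0 i * phi' (sqnorm y)) =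
  (2 \*: fun y : 'rV[R]_n => y 0 i) * (phi' \o sqnorm) by [].
rewrite /partial deriveM; last 2 first.
  exact/derivableZ/derivable_coord.
  exact/diff_derivable/(differentiable_comp_sqnorm x phi'_deriv).
rewrite -!/(partial _ j x).
rewrite (partial_comp j (differentiable_sqnorm x) (phi'_deriv (sqnorm_ge0 x))).
rewrite partial_sqnorm /partial deriveZ; last exact: derivable_coord.
by have -> := derive_coord x (ebasis R j) i; rewrite ebasisE /= /GRing.scale /=; ring.
Qed.

Lemma twice_diff_radial x : twice_diff (radial phi) x.
Proof.
split; first exact: differentiable_comp_sqnorm phi_deriv.
move=> i; rewrite partial_radial.
have -> : (fun y : 'rV[R]_n => 2 * y 0 i * phi' (sqnorm y)) =
  (2 \*: fun y : 'rV[R]_n => y 0 i) * (phi' \o sqnorm) by [].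
apply: differentiableM; last exact: differentiable_comp_sqnorm phi'_deriv.
exact/differentiableZ/differentiable_coord.
Qed.

End Radial.

End RadialCalculus.

Section PowerProfile.
Variables (R : realType) (n : nat).

Lemma is_derive_powR_shift (A s p t : R) : 0 < t + s ->
  is_derive t 1 (fun y => A * (y + s) `^ p) (A * p * (t + s) `^ (p - 1)).
Proof.
move=> ts; have shift_deriv : is_derive t 1 (fun y : R => y + s) 1.
  by rewrite -[X in is_derive _ _ _ X]addr0; apply: is_deriveD.
have := is_derive1_comp (f := fun y : R => y `^ p) (g := fun y : R => y + s)
  (is_derive1_powR p ts) shift_deriv.
by rewrite mulr1 -mulrA => /(is_deriveZ A).
Qed.

Definition barrier (A s p : R) : 'rV[R]_n -> R := radial (fun t => A * (t + s) `^ p).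

Variables (A s p : R) (x : 'rV[R]_n).
Hypothesis s_gt0 : 0 < s.

Let q := sqnorm x + s.
Let u := A * p * q `^ (p - 1).

Let profile_deriv (B r t : R) : 0 <= t ->
  is_derive t 1 (fun y => B * (y + s) `^ r) (B * r * (t + s) `^ (r - 1)).
Proof. by move=> t0; apply: is_derive_powR_shift; rewrite ltr_wpDl. Qed.

Lemma twice_diff_barrier : twice_diff (barrier A s p) x.
Proof. exact: twice_diff_radial (profile_deriv A p) (profile_deriv (A * p) (p - 1)) x. Qed.

Lemma partial_barrier i : partial (barrier A s p) i x = 2 * x 0 i * u.
Proof. by rewrite /barrier (partial_radial (profile_deriv A p)). Qed.

Lemma partial2_barrier i j : partial (partial (barrier A s p) i) j x =
  u * (4 * (p - 1) / q * (x 0 i * x 0 j) + 2 * (i == j)%:R).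
Proof.
rewrite /barrier (partial2_radial (profile_deriv A p) (profile_deriv (A * p) (p - 1))).
have q_gt0 : 0 < q by rewrite /q ltr_wpDl ?sqnorm_ge0.
rewrite [q `^ (p - 1 - 1)]powRB ?(gt_eqF q_gt0) ?implybT // powRr1 ?ltW // /u.
by field; rewrite gt_eqF.
Qed.

Hypotheses (A_gt0 : 0 < A) (p_lt0 : p < 0) (p_ge : 5 - 2 * n%:R <= 4 * p).

Let q_gt0 : 0 < q. Proof. by rewrite /q ltr_wpDl ?sqnorm_ge0. Qed.

Lemma barrier_slope_lt0 : u < 0.
Proof. by rewrite /u -mulrA pmulr_rlt0 // pmulr_llt0 // powR_gt0. Qed.

(* This is where the lower bound 2p >= -(n - 5/2) on the exponent enters. *)
Let radial_curvature_le : 4 * (1 - p) / q * sqnorm x <= 2 * n%:R - 1.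
Proof.
apply: (@le_trans _ _ (4 * (1 - p) / q * q)); last first.
  by rewrite divfK ?gt_eqF //; have := p_ge; lra.
apply: ler_wpM2l; last by rewrite /q lerDl ltW.
by rewrite divr_ge0 ?ltW //; have := p_lt0; lra.
Qed.

Lemma laplacian_barrier_le : \sum_(i < n) partial (partial (barrier A s p) i) i x <= u.
Proof.
under eq_bigr do rewrite partial2_barrier eqxx.
rewrite -mulr_sumr big_split /= sumr_const card_ord -mulr_sumr.
have -> : \sum_(i < n) x 0 i * x 0 i = sqnorm x by apply: eq_bigr => i _; rewrite expr2.
rewrite -[leRHS]mulr1 (ler_nM2l barrier_slope_lt0).
have -> : 4 * (p - 1) / q = - (4 * (1 - p) / q) by ring.
by have := radial_curvature_le; lra.
Qed.

Lemma norm_partial2_barrier_le i j :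
  `|partial (partial (barrier A s p) i) j x| <= (2 * n%:R + 1) * `|u|.
Proof.
rewrite partial2_barrier normrM mulrC ler_wpM2r //.
apply: le_trans (ler_normD _ _) _.
have : `|2 * (i == j)%:R : R| <= 2 by rewrite normrM ger0_norm // ler_piMr ?norm_delta_le1.
have : `|4 * (p - 1) / q * (x 0 i * x 0 j)| <= 2 * n%:R - 1.
  apply: le_trans radial_curvature_le; rewrite normrM.
  have -> : `|4 * (p - 1) / q| = 4 * (1 - p) / q.
    rewrite -normrN ger0_norm; first ring.
    by rewrite -mulNr divr_ge0 ?ltW //; have := p_lt0; lra.
  by rewrite ler_wpM2l ?norm_coordM_le // divr_ge0 ?ltW //; have := p_lt0; lra.
lra.
Qed.

Lemma norm_partial_barrier_le k : `|partial (barrier A s p) k x| <= 2 * enorm x * `|u|.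
Proof.
by rewrite partial_barrier !normrM ger0_norm // ler_wpM2r // ler_wpM2l ?norm_coord_le.
Qed.

Lemma norm_partialM_barrier_le k l :
  `|partial (barrier A s p) k x * partial (barrier A s p) l x| <= 4 * u ^+ 2 * sqnorm x.
Proof.
rewrite !partial_barrier.
have -> : 2 * x 0 k * u * (2 * x 0 l * u) = 4 * u ^+ 2 * (x 0 k * x 0 l) by ring.
have u2_ge0 : 0 <= 4 * u ^+ 2 by rewrite mulr_ge0 ?sqr_ge0.
by rewrite normrM (ger0_norm u2_ge0) ler_wpM2l ?norm_coordM_le.
Qed.

End PowerProfile.

Lemma rot_sym_radial (R : realType) (n : nat) (phi : R -> R) (r0 : R) :
  rot_sym_ext r0 (radial (n := n) phi).
Proof. by move=> x y _ xy; rewrite /radial -!enorm_sqr xy. Qed.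

Lemma ler_powR_npos (R : realType) (a b p : R) : 0 < a -> a <= b -> p <= 0 ->
  b `^ p <= a `^ p.
Proof.
move=> a_gt0 ab p_le0; rewrite -(opprK p) !(powRN _ (- p)).
rewrite lef_pV2 ?posrE ?powR_gt0 //; last exact: lt_le_trans ab.
by apply: ge0_ler_powR; rewrite ?oppr_ge0 // nnegrE ltW // (lt_le_trans a_gt0).
Qed.

Section BarrierScaling.
Variables (R : realType) (n : nat) (c r0 p : R).
Hypotheses (c_ge0 : 0 <= c) (r0_gt0 : 0 < r0).

Let A := c * r0 `^ (1 - 2 * p).

Lemma barrier_bounds (x : 'rV[R]_n) : p <= 0 -> r0 <= enorm x ->
  c * 2 `^ p * (r0 `^ (1 - 2 * p) * enorm x `^ (2 * p)) <= barrier A (r0 ^+ 2) p x /\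
  barrier A (r0 ^+ 2) p x <= c * (r0 `^ (1 - 2 * p) * enorm x `^ (2 * p)).
Proof.
move=> p_le0 r0x.
have s_le : r0 ^+ 2 <= sqnorm x.
  by rewrite -enorm_sqr ler_pXn2r ?nnegrE ?(ltW r0_gt0) ?sqrtr_ge0.
have Q_gt0 : 0 < sqnorm x by apply: lt_le_trans s_le; rewrite exprn_gt0.
have -> : enorm x `^ (2 * p) = sqnorm x `^ p.
  by rewrite powRrM -enorm_sqr -powR_mulrn ?sqrtr_ge0.
have A_ge0 : 0 <= A by rewrite mulr_ge0 ?powR_ge0.
have -> : c * 2 `^ p * (r0 `^ (1 - 2 * p) * sqnorm x `^ p) = A * (2 * sqnorm x) `^ p.
  by rewrite powRM ?(ltW Q_gt0) // /A; ring.
rewrite /barrier /radial mulrA -/A.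
split; apply: ler_wpM2l => //.
  by apply: ler_powR_npos => //; [rewrite ltr_wpDr ?sqr_ge0 | rewrite mulr_natl mulr2n lerD2l].
by apply: ler_powR_npos => //; rewrite lerDl sqr_ge0.
Qed.

Lemma barrier_slope_sqr_le t : 0 <= t -> p <= 2^-1 ->
  (A * p * (t + r0 ^+ 2) `^ (p - 1)) ^+ 2 * (t + r0 ^+ 2) <= c ^+ 2 * p ^+ 2.
Proof.
move=> t_ge0 p_le; set q := t + r0 ^+ 2.
have s_gt0 : 0 < r0 ^+ 2 by rewrite exprn_gt0.
have q_gt0 : 0 < q by rewrite /q ltr_wpDl.
have q_neq0 : q != 0 by rewrite gt_eqF.
have powq : q `^ (p - 1) ^+ 2 * q = (q `^ (1 - 2 * p))^-1.
  rewrite -powRN expr2 -powRD ?q_neq0 ?implybT // -[X in _ * X](powRr1 (ltW q_gt0)).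
  by rewrite -powRD ?q_neq0 ?implybT //; congr (_ `^ _); ring.
have powr0 : r0 `^ (1 - 2 * p) ^+ 2 = (r0 ^+ 2) `^ (1 - 2 * p).
  by rewrite !expr2 powRM ?ltW.
have -> : (A * p * q `^ (p - 1)) ^+ 2 * q =
    c ^+ 2 * p ^+ 2 * ((r0 ^+ 2) `^ (1 - 2 * p) / q `^ (1 - 2 * p)).
  by rewrite -powr0 -powq /A; ring.
rewrite -[leRHS]mulr1 ler_wpM2l ?(mulr_ge0 (sqr_ge0 c) (sqr_ge0 p)) //.
rewrite ler_pdivrMr ?powR_gt0 // mul1r ge0_ler_powR ?nnegrE ?(ltW s_gt0) ?(ltW q_gt0) //.
  by have := p_le; lra.
by rewrite lerDr.
Qed.

End BarrierScaling.

Section QuasilinearPerturbation.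
Variables (R : realFieldType) (n : nat).
Variables (S : 'I_n -> 'I_n -> R) (Ga : 'I_n -> 'I_n -> 'I_n -> R).
Variables (d : 'I_n -> R) (h : 'I_n -> 'I_n -> R) (u eta G : R).
Hypotheses (n_gt0 : (0 < n)%N) (u_lt0 : u < 0).
Hypotheses (eta_ge0 : 0 <= eta) (eta_small : n%:R ^+ 3 * eta <= 14^-1).
Hypotheses (G_ge0 : 0 <= G) (G_small : n%:R ^+ 5 * G <= 160^-1).
Hypothesis S_near1 : forall i j, `|S i j - (i == j)%:R| <= eta.
Hypothesis dd_le : forall k l, `|d k * d l| <= G.
Hypothesis Ga_d_le : forall k i j, `|Ga k i j * d k| <= 2 * eta * `|u|.
Hypothesis h_le : forall i j, `|h i j| <= (2 * n%:R + 1) * `|u|.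
Hypothesis trace_h_le : \sum_(i < n) h i i <= u.

Let gs := \sum_(k < n) \sum_(l < n) S k l * d k * d l.
Let N i j := \sum_(k < n) \sum_(l < n) S i k * S j l * d k * d l.
Let H i j := h i j - \sum_(k < n) Ga k i j * d k.

Let n_ge1 : 1 <= n%:R :> R. Proof. by rewrite ler1n. Qed.

Let npow_le k l (a : R) : (k <= l)%N -> 0 <= a -> n%:R ^+ k * a <= n%:R ^+ l * a.
Proof. by move=> kl a_ge0; rewrite ler_wpM2r // ler_weXn2l. Qed.

Let eta_le1 : eta <= 1.
Proof. by have := @npow_le 0 3 _ isT eta_ge0; rewrite expr0 mul1r; have := eta_small; lra. Qed.

Let norm_S_le i j : `|S i j| <= 2.
Proof.
have := ler_normD (S i j - (i == j)%:R) (i == j)%:R; rewrite subrK.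
by have := S_near1 i j; have := norm_delta_le1 R i j; have := eta_le1; lra.
Qed.

Lemma norm_quadform_le : `|gs| <= 2^-1.
Proof.
apply: le_trans (_ : n%:R * (n%:R * (2 * G)) <= _).
  by apply: norm_sum2_ord_le => k l; rewrite -mulrA normrM ler_pM.
have := @npow_le 2 5 _ isT G_ge0; rewrite expr2; have := G_small; lra.
Qed.

Lemma norm_cov_hess_le i j : `|H i j| <= 5 * n%:R * `|u|.
Proof.
apply: le_trans (ler_normB _ _) _.
have := norm_sum_ord_le (fun k => Ga_d_le k i j); have := h_le i j.
have : eta * (n%:R * `|u|) <= n%:R * `|u| by rewrite ler_piMl ?mulr_ge0.
have : `|u| <= n%:R * `|u| by rewrite ler_peMl.
nra.
Qed.

Lemma trace_cov_hess_le : \sum_(i < n) H i i <= u + n%:R * (n%:R * (2 * eta * `|u|)).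
Proof.
rewrite sumrB; have := lerNnormlW (norm_sum2_ord_le (fun i k => Ga_d_le k i i)).
by have := trace_h_le; lra.
Qed.

Let gs_half : 2^-1 <= 1 - gs.
Proof. by have := norm_quadform_le; have := ler_norm gs; lra. Qed.

Let norm_inv_le : `|(1 - gs)^-1| <= 2.
Proof.
rewrite normfV ger0_norm; last exact: le_trans gs_half.
by rewrite invf_ple ?posrE ?(lt_le_trans _ gs_half).
Qed.

Let norm_N_le i j : `|N i j| <= n%:R * (n%:R * (2 * 2 * G)).
Proof.
apply: norm_sum2_ord_le => k l; rewrite -mulrA normrM [`|S i k * _|]normrM.
by apply: ler_pM; rewrite ?mulr_ge0 ?ler_pM.
Qed.

(* Split g^ij = delta^ij + (S^ij - delta^ij) + N^ij / (1 - gs): the first part gives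
   the trace of H, at most u + O(n^2 eta) |u|, the other two are O(n^3 eta + n^5 G) |u|. *)
Lemma quasilinear_perturbation : gs < 1 /\
  \sum_(i < n) \sum_(j < n) (S i j + N i j / (1 - gs)) * H i j <= 0.
Proof.
split; first by have := gs_half; lra.
rewrite (eq_bigr (fun i => H i i + \sum_(j < n) (S i j - (i == j)%:R) * H i j
   + \sum_(j < n) N i j / (1 - gs) * H i j)); last first.
  move=> i _; rewrite -[H i i](sum_mul_delta (H i)) -!big_split.
  by apply: eq_bigr => j _; rewrite eq_sym /=; ring.
rewrite big_split [X in X + _ <= _]big_split /=.
set E1 := \sum_(i < n) \sum_(j < n) (S i j - _) * H i j.
set E2 := \sum_(i < n) \sum_(j < n) N i j / (1 - gs) * H i j.
have E1_le : `|E1| <= n%:R * (n%:R * (eta * (5 * n%:R * `|u|))).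
  by apply: norm_sum2_ord_le => i j; rewrite normrM ler_pM ?norm_cov_hess_le.
have E2_le : `|E2| <= n%:R * (n%:R * ((n%:R * (n%:R * (2 * 2 * G))) * 2 * (5 * n%:R * `|u|))).
  apply: norm_sum2_ord_le => i j; rewrite !normrM.
  by apply: ler_pM; rewrite ?mulr_ge0 ?ler_pM ?norm_cov_hess_le.
have := ler_norm E1; have := ler_norm E2.
have : n%:R ^+ 2 * (eta * `|u|) <= n%:R ^+ 3 * (eta * `|u|) by rewrite npow_le ?mulr_ge0.
have : n%:R ^+ 3 * eta * `|u| <= 14^-1 * `|u| by rewrite ler_wpM2r.
have : n%:R ^+ 5 * G * `|u| <= 160^-1 * `|u| by rewrite ler_wpM2r.
have := trace_cov_hess_le; have := ltr0_norm u_lt0.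
have := u_lt0; lra.
Qed.

End QuasilinearPerturbation.

Lemma norm_invmx_sub1_le (R : realFieldType) (n : nat) (A : 'M[R]_n) (eps : R) :
  0 <= eps -> n%:R * eps <= 2^-1 -> (forall i j, `|A i j - (i == j)%:R| <= eps) ->
  forall i j, `|invmx A i j - (i == j)%:R| <= 2 * eps.
Proof.
move=> eps_ge0 neps A_near1.
have [A_unit|A_nunit] := boolP (A \in unitmx); last first.
  move=> i j; rewrite invmx_out ?inE //.
  by apply: le_trans (A_near1 i j) _; rewrite ler_peMl // ler1n.
set B := invmx A.
have B_sub1 i j : B i j - (i == j)%:R = - \sum_(k < n) B i k * (A k j - (k == j)%:R).
  have := congr1 (fun M : 'M[R]_n => M i j) (mulVmx A_unit); rewrite !mxE => BA.
  rewrite (eq_bigr (fun k => B i k * A k j - B i k * (k == j)%:R)); last first.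
    by move=> k _; rewrite mulrBr.
  by rewrite sumrB sum_mul_delta -/B BA opprB.
have B_sub1_le i j : `|B i j - (i == j)%:R| <= eps * \sum_(k < n) `|B i k|.
  rewrite B_sub1 normrN mulr_sumr; apply: le_trans (ler_norm_sum _ _ _) _.
  by apply: ler_sum => k _; rewrite normrM mulrC ler_wpM2r.
have row_le i : \sum_(k < n) `|B i k| <= 2.
  set M := \sum_(k < n) `|B i k|.
  have : M <= \sum_(k < n) (`|(i == k)%:R : R| + eps * M).
    apply: ler_sum => k _; have := ler_normD (B i k - (i == k)%:R) (i == k)%:R.
    by rewrite subrK addrC => /le_trans; apply; rewrite lerD2l B_sub1_le.
  rewrite big_split /= sumr_const card_ord -[eps * M *+ n]mulr_natl mulrA.
  rewrite (eq_bigr (fun k => 1 * (k == i)%:R)) ?sum_mul_delta; last first.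
    by move=> k _; rewrite mul1r eq_sym; case: (k == i); rewrite ?normr1 ?normr0.
  have : n%:R * eps * M <= 2^-1 * M by rewrite ler_wpM2r ?sumr_ge0.
  lra.
by move=> i j; apply: le_trans (B_sub1_le i j) _; rewrite mulrC ler_wpM2r.
Qed.

Lemma norm_christoffel_le (R : realType) (n : nat) (sigma : 'rV[R]_n -> 'M[R]_n)
    (x : 'rV[R]_n) (M : R) :
  (forall k l, `|sinv sigma x k l| <= 2) ->
  (forall i j k, `|partial (fun y => sigma y i j) k x| <= M) ->
  forall k i j, `|christoffel sigma x k i j| <= 3 * n%:R * M.
Proof.
move=> S_le dsigma_le k i j; rewrite /christoffel normrM ger0_norm ?invr_ge0 //.
have -> : 3 * n%:R * M = 2^-1 * (n%:R * (2 * (3 * M))) by field.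
apply: ler_wpM2l => //; apply: norm_sum_ord_le => l; rewrite normrM ler_pM //.
apply: le_trans (ler_normB _ _) _; apply: le_trans (lerD (ler_normD _ _) (lexx _)) _.
by have := dsigma_le j l i; have := dsigma_le i l j; have := dsigma_le i j l; lra.
Qed.

Lemma sinv_christoffel_near1 (R : realType) (n : nat) (sigma : 'rV[R]_n -> 'M[R]_n)
    (x : 'rV[R]_n) (e : R) :
  (0 < n)%N -> 0 <= e -> n%:R * e <= 2^-1 ->
  (forall i j, `|sigma x i j - (i == j)%:R| <= e) ->
  (forall i j k, `|partial (fun y => sigma y i j) k x| <= e / enorm x) ->
  (forall i j, `|sinv sigma x i j - (i == j)%:R| <= 3 * n%:R * e) /\
  (forall k i j, `|christoffel sigma x k i j| <= 3 * n%:R * e / enorm x).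
Proof.
move=> n_gt0 e_ge0 ne_le sigma_near1 dsigma_le.
have S_near1 := norm_invmx_sub1_le e_ge0 ne_le sigma_near1.
have e_le : e <= n%:R * e by rewrite ler_peMl // ler1n.
split=> [i j|k i j]; first by apply: le_trans (S_near1 i j) _; lra.
rewrite -mulrA; apply: norm_christoffel_le dsigma_le k i j => k l.
have := ler_normD (sinv sigma x k l - (k == l)%:R) (k == l)%:R; rewrite subrK.
by have := S_near1 k l; have := norm_delta_le1 R k l; lra.
Qed.

Lemma barrier_supersolution_at (R : realType) (n : nat) (sigma : 'rV[R]_n -> 'M[R]_n)
    (x : 'rV[R]_n) (c r0 p e : R) :
  (0 < n)%N -> 0 < c -> 0 < r0 -> p < 0 -> 5 - 2 * n%:R <= 4 * p ->
  n%:R ^+ 5 * (4 * c ^+ 2 * p ^+ 2) <= 160^-1 ->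
  0 <= e -> n%:R ^+ 4 * e <= 42^-1 -> 0 < enorm x ->
  (forall i j, `|sigma x i j - (i == j)%:R| <= e) ->
  (forall i j k, `|partial (fun y => sigma y i j) k x| <= e / enorm x) ->
  let b := barrier (c * r0 `^ (1 - 2 * p)) (r0 ^+ 2) p in
  twice_diff b x /\ grad_sq sigma b x < 1 /\ static_op sigma b x <= 0.
Proof.
move=> n_gt0 c_gt0 r0_gt0 p_lt0 p_ge grad_small e_ge0 e_small x_gt0 sigma_near1 dsigma_le b.
set A := c * r0 `^ (1 - 2 * p); set s := r0 ^+ 2.
have s_gt0 : 0 < s by rewrite exprn_gt0.
have A_gt0 : 0 < A by rewrite mulr_gt0 ?powR_gt0.
set u := A * p * (sqnorm x + s) `^ (p - 1).
have ne_le : n%:R * e <= 2^-1.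
  have : n%:R * e <= n%:R ^+ 4 * e by rewrite ler_wpM2r // -[leLHS]expr1 ler_weXn2l ?ler1n.
  by have := e_small; lra.
have [S_near1 Ga_le] := sinv_christoffel_near1 n_gt0 e_ge0 ne_le sigma_near1 dsigma_le.
set eta := 3 * n%:R * e in S_near1 Ga_le.
have eta_ge0 : 0 <= eta by rewrite mulr_ge0 // mulr_ge0.
have eta_small : n%:R ^+ 3 * eta <= 14^-1.
  have -> : n%:R ^+ 3 * eta = 3 * (n%:R ^+ 4 * e) by rewrite /eta; ring.
  by have := e_small; lra.
have Ga_d_le k i j : `|christoffel sigma x k i j * partial b k x| <= 2 * eta * `|u|.
  rewrite normrM; apply: le_trans (ler_pM _ _ (Ga_le k i j)
    (norm_partial_barrier_le A p x s_gt0 k)) _ => //.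
  by rewrite -/u [leLHS](_ : _ = 2 * eta * `|u|) //; field; rewrite gt_eqF.
have G_ge0 : 0 <= 4 * c ^+ 2 * p ^+ 2 by rewrite -mulrA mulr_ge0 // mulr_ge0 ?sqr_ge0.
have dd_le k l : `|partial b k x * partial b l x| <= 4 * c ^+ 2 * p ^+ 2.
  apply: le_trans (norm_partialM_barrier_le A p x s_gt0 k l) _; rewrite -/u -mulrA.
  apply: (@le_trans _ _ (4 * (u ^+ 2 * (sqnorm x + s)))).
    by rewrite ler_wpM2l // ler_wpM2l ?sqr_ge0 // lerDl ltW.
  rewrite -mulrA ler_wpM2l //; apply: barrier_slope_sqr_le (sqnorm_ge0 x) _ => //.
  by have := p_lt0; lra.
have [gs_lt1 op_le0] := quasilinear_perturbation n_gt0 (barrier_slope_lt0 x s_gt0 A_gt0 p_lt0)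
  eta_ge0 eta_small G_ge0 grad_small
  S_near1 dd_le Ga_d_le (norm_partial2_barrier_le A x s_gt0 p_lt0 p_ge)
  (laplacian_barrier_le x s_gt0 A_gt0 p_lt0 p_ge).
by split; [exact: twice_diff_barrier | split].
Qed.

Lemma asymp_flat_near1 (R : realType) (n : nat) (sigma : 'rV[R]_n -> 'M[R]_n) :
  asymp_flat sigma -> forall e : R, 0 < e -> exists r1 : R, forall x : 'rV[R]_n,
    r1 <= enorm x ->
    (forall i j, `|sigma x i j - (i == j)%:R| <= e) /\
    (forall i j k, `|partial (fun y => sigma y i j) k x| <= e / enorm x).
Proof.
move=> [omega [_ [/cvgr0Pnorm_lt omega_cvg0 [C [R1 [C_gt0 flat]]]]]] e e_gt0.
have [M [_ omega_small]] := omega_cvg0 _ (divr_gt0 e_gt0 C_gt0).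
exists (Num.max R1 (M + 1)) => x; rewrite ge_max => /andP[R1x Mx].
have C_omega_le : C * omega (enorm x) <= e.
  have /ltW omega_le : `|omega (enorm x)| < e / C by apply: omega_small; lra.
  apply: le_trans (ler_norm _) _; rewrite normrM gtr0_norm //.
  by apply: le_trans (ler_wpM2l (ltW C_gt0) omega_le) _; rewrite mulrCA divff ?mulr1 ?gt_eqF.
split=> i j; first by have [+ _] := flat x R1x i j; move/le_trans; apply.
move=> k; have [_ /(_ k)] := flat x R1x i j; move/le_trans; apply.
by rewrite mulrA ler_wpM2r ?invr_ge0 ?sqrtr_ge0.
Qed.

Lemma barrier_comparable (R : realType) (n : nat) (c r0 : R) (x : 'rV[R]_n) :
  (3 <= n)%N -> 0 < c -> c <= 1 -> 0 < r0 -> r0 <= enorm x ->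
  let p := 2^-1 * - (n%:R - 5 / 2) in
  let b := barrier (c * r0 `^ (1 - 2 * p)) (r0 ^+ 2) p in
  let X := r0 `^ (n%:R - 3 / 2) * enorm x `^ (- (n%:R - 5 / 2)) in
  (2 ^+ n / c)^-1 * X <= b x /\ b x <= 2 ^+ n / c * X.
Proof.
move=> n_ge3 c_gt0 c_le1 r0_gt0 r0x p b X.
have n_ge3' : 3 <= n%:R :> R by rewrite ler_nat.
have p_le0 : p <= 0 by rewrite /p; lra.
have X_E : X = r0 `^ (1 - 2 * p) * enorm x `^ (2 * p).
  by rewrite /X /p; congr (_ `^ _ * _ `^ _); field.
have [lo up] := barrier_bounds (ltW c_gt0) r0_gt0 p_le0 r0x; rewrite -X_E in lo up.
have X_ge0 : 0 <= X by rewrite mulr_ge0 ?powR_ge0.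
split.
  apply: le_trans lo; rewrite invf_div ler_wpM2r //; apply: ler_wpM2l; first exact: ltW.
  by rewrite -powR_invn //; apply: ler_powR; rewrite /p; lra.
apply: le_trans up _; apply: ler_wpM2r => //; rewrite ler_pdivlMr // -expr2.
apply: (@le_trans _ _ 1); first by rewrite expr_le1 // ltW.
by rewrite exprn_ege1 // ler1n.
Qed.

Lemma barrier_constant_small (R : realFieldType) (n : nat) (p c : R) : (3 <= n)%N ->
  p = 2^-1 * - (n%:R - 5 / 2) -> c = (16 * n%:R ^+ 4)^-1 ->
  n%:R ^+ 5 * (4 * c ^+ 2 * p ^+ 2) <= 160^-1.
Proof.
move=> n_ge3 -> ->; have n_ge3' : 3 <= n%:R :> R by rewrite ler_nat.
have n_neq0 : n%:R != 0 :> R by rewrite gt_eqF //; lra.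
have p_sqr_le : 4 * (2^-1 * - (n%:R - 5 / 2)) ^+ 2 <= n%:R ^+ 2 :> R by nra.
have n_sqr_le : n%:R ^+ 2 <= n%:R ^+ 3 :> R by rewrite ler_eXn2l //; lra.
set P := 4 * _ ^+ 2 in p_sqr_le *.
have -> : n%:R ^+ 5 * (4 * (16 * n%:R ^+ 4)^-1 ^+ 2 * (2^-1 * - (n%:R - 5 / 2)) ^+ 2)
    = 256^-1 * P / n%:R ^+ 3 :> R by rewrite /P; field.
have n_cube_ge0 : 0 <= n%:R ^+ 3 :> R by rewrite exprn_ge0.
by rewrite ler_pdivrMr ?exprn_gt0 //; lra.
Qed.

Theorem lemma3p1 (R : realType) (n : nat) (hn : (3 <= n)%N) :
  exists C : R, 0 < C /\
  forall (R0 : R) (sigma : 'rV[R]_n -> 'M[R]_n),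
    riem_metric_ext R0 sigma -> asymp_flat sigma ->
    exists r1 : R, 0 < r1 /\
    forall r0 : R, r1 <= r0 ->
      exists b : 'rV[R]_n -> R,
        rot_sym_ext r0 b /\
        (forall x : 'rV[R]_n, r0 <= enorm x ->
           C^-1 * (r0 `^ (n%:R - 3 / 2) * enorm x `^ (- (n%:R - 5 / 2))) <= b x /\
           b x <= C * (r0 `^ (n%:R - 3 / 2) * enorm x `^ (- (n%:R - 5 / 2)))) /\
        (forall x : 'rV[R]_n, r0 < enorm x ->
           twice_diff b x /\ grad_sq sigma b x < 1 /\ static_op sigma b x <= 0).
Proof.
have n_ge3 : 3 <= n%:R :> R by rewrite ler_nat.
have n4_gt0 : 0 < n%:R ^+ 4 :> R by rewrite exprn_gt0 //; lra.
set p : R := 2^-1 * - (n%:R - 5 / 2).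
set c : R := (16 * n%:R ^+ 4)^-1.
set e : R := (42 * n%:R ^+ 4)^-1.
have c_gt0 : 0 < c by rewrite invr_gt0 mulr_gt0.
have n4_ge1 : 1 <= n%:R ^+ 4 :> R by rewrite exprn_ege1 //; lra.
have c_le1 : c <= 1 by rewrite invf_le1 ?mulr_gt0 //; lra.
have e_gt0 : 0 < e by rewrite invr_gt0 mulr_gt0.
exists (2 ^+ n / c); split; first by rewrite divr_gt0 // exprn_gt0.
move=> R0 sigma _ /asymp_flat_near1 /(_ e e_gt0) [r1 near1].
exists (Num.max 1 r1); split; first by rewrite lt_max ltr01.
move=> r0; rewrite ge_max => /andP[r0_ge1 r1_le].
have r0_gt0 : 0 < r0 by lra.
exists (barrier (c * r0 `^ (1 - 2 * p)) (r0 ^+ 2) p).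
split; first exact: rot_sym_radial.
split=> x r0x; first exact: barrier_comparable.
have [sigma_near1 dsigma_le] := near1 x (le_trans r1_le (ltW r0x)).
apply: (barrier_supersolution_at (e := e)) => //.
- exact: leq_trans hn.
- by rewrite /p; lra.
- by rewrite /p; lra.
- exact: barrier_constant_small hn erefl erefl.
- exact: ltW.
- by rewrite /e invfM mulrCA mulfV ?mulr1 // gt_eqF.
- exact: lt_trans r0x.
Qed.
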